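(* Let $K=\mathbb{F}_{q^n}$, let $\sigma$ be an automorphism of $K$ of order $n>1$ with fixed field $F=\mathbb{F}_q$, and let $f\in K[t;\sigma]$ be monic of degree $m\ge 2$, irreducible and not right-invariant, with $n\ge m-1$. Suppose the multiplicative loop $L_f$ of $S_f$ has nucleus $K^\times\cdot 1$. Then $|\{T_c\in\mathrm{Inn}(L_f)\,:\, T_c \text{ is an automorphism of } L_f\}|\ge \frac{q^n-1}{q-1}.$
   Context: $R=K[t;\sigma]$ is the twisted polynomial ring ($tb=\sigma(b)t$ for $b\in K$). $f$ is irreducible if it has no factorization into two factors of smaller degree; right-invariant if $Rf$ is a two-sided ideal. $S_f$ is the set of elements of $R$ of degree $<m$ with multiplication $g\circ h=gh\bmod_r f$ (remainder of right division by $f$), a proper semifield; $L_f=S_f\setminus\{0\}$ is its multiplicative loop. The nucleus of a loop $L$ is the set of $x$ with $(xy)z=x(yz)$, $(yx)z=y(xz)$, $(yz)x=y(zx)$ for all $y,z\in L$. For $x\in L$, $L_x(y)=xy$, $R_x(y)=yx$, and $T_x=L_x^{-1}R_x$ is the middle inner mapping; $\mathrm{Mlt}(L)$ is the group generated by all $L_x,R_x$ and $\mathrm{Inn}(L)=\{g\in\mathrm{Mlt}(L):g(1)=1\}$. *)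

From HB Require Import structures.
From mathcomp Require Import all_boot all_order all_algebra.
Set Implicit Arguments. Unset Strict Implicit. Unset Printing Implicit Defensive.
Import GRing.Theory.
Local Open Scope ring_scope.

(* Twisted polynomial ring R = K[t; sigma], represented on the carrier {poly K}:
   sum a_i t^i  ~  sum a_i 'X^i, with the twisted multiplication
   (a t^i) * (sum_j b_j t^j) = sum_j a sigma^i(b_j) t^(i+j). *)
Section Skew.
Variable K : fieldType.
Variable sigma : K -> K.

Definition skmul (p r : {poly K}) : {poly K} :=
  \sum_(i < size p) (p`_i *: ('X^i * map_poly (iter i sigma) r)).

(* remainder of RIGHT division by a monic f: g = h f + r, size r < size f.
   Each step subtracts (lead g) t^(deg g - deg f) f, which (f monic) kills
   the leading term of g. *)
Fixpoint skmod_rec (f : {poly K}) (k : nat) (g : {poly K}) : {poly K} :=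
  if k is k'.+1 then
    if (size g < size f)%N then g
    else skmod_rec f k' (g - skmul (lead_coef g *: 'X^(size g - size f)) f)
  else g.

Definition skmodr (g f : {poly K}) : {poly K} := skmod_rec f (size g) g.

Definition sk_irreducible (f : {poly K}) : Prop :=
  forall g h : {poly K}, f = skmul g h ->
    ~ ((size g < size f)%N /\ (size h < size f)%N).

(* R f is a two-sided ideal (it is always a left ideal): closed under right
   multiplication by elements of R. *)
Definition right_invariant (f : {poly K}) : Prop :=
  forall a g : {poly K}, exists h : {poly K}, skmul (skmul a f) g = skmul h f.
End Skew.

Section Loop.
Variable K : finFieldType.
Variable sigma : K -> K.
Variable m : nat.
Variable f : {poly K}.

(* S_f = polynomials of degree < m, encoded by their coefficient row vector *)
Definition Sf := 'rV[K]_m.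
Definition pol (v : Sf) : {poly K} := \sum_(i < m) (v ord0 i *: 'X^i).
Definition vec (p : {poly K}) : Sf := \row_(i < m) p`_i.

Definition Smul (u v : Sf) : Sf := vec (skmodr sigma (skmul sigma (pol u) (pol v)) f).

Definition Lf := {v : Sf | v != 0}.

(* multiplication of L_f (the default x is only used if the product were 0,
   which does not happen as S_f is a semifield) *)
Definition Lmul (x y : Lf) : Lf := insubd x (Smul (val x) (val y)).

Definition Lleft (x : Lf) : Lf -> Lf := fun y => Lmul x y.
Definition Lright (x : Lf) : Lf -> Lf := fun y => Lmul y x.

Definition finvp (h : Lf -> Lf) (y : Lf) : Lf := odflt y [pick z | h z == y].

Definition Tmid (x : Lf) : {ffun Lf -> Lf} :=
  [ffun y => finvp (Lleft x) (Lright x y)].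

(* Mlt(L): group generated by all L_x, R_x (finite: closure of the identity
   under left composition with generators and their inverses) *)
Inductive in_Mlt : {ffun Lf -> Lf} -> Prop :=
| Mlt_id : in_Mlt [ffun y => y]
| Mlt_L x g : in_Mlt g -> in_Mlt [ffun y => Lleft x (g y)]
| Mlt_R x g : in_Mlt g -> in_Mlt [ffun y => Lright x (g y)]
| Mlt_Linv x g : in_Mlt g -> in_Mlt [ffun y => finvp (Lleft x) (g y)]
| Mlt_Rinv x g : in_Mlt g -> in_Mlt [ffun y => finvp (Lright x) (g y)].

Definition is_one (x : Lf) : Prop := val x = vec 1.

Definition in_Inn (g : {ffun Lf -> Lf}) : Prop :=
  in_Mlt g /\ forall u : Lf, is_one u -> g u = u.

Definition is_loop_aut (g : {ffun Lf -> Lf}) : Prop :=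
  bijective g /\ forall x y : Lf, g (Lmul x y) = Lmul (g x) (g y).

Definition in_nucleus (x : Lf) : Prop :=
  forall y z : Lf,
    [/\ Lmul (Lmul x y) z = Lmul x (Lmul y z),
        Lmul (Lmul y x) z = Lmul y (Lmul x z) &
        Lmul (Lmul y z) x = Lmul y (Lmul z x)].

Definition nucleus_is_scalars : Prop :=
  forall x : Lf, in_nucleus x <-> exists c : K, c != 0 /\ val x = vec c%:P.
End Loop.

From HB Require Import structures.
From mathcomp Require Import all_boot all_order all_algebra.
Set Implicit Arguments. Unset Strict Implicit. Unset Printing Implicit Defensive.
Import GRing.Theory.
Local Open Scope ring_scope.

(** For c in K^x the element c.1 is nuclear, so the middle inner mapping
    T_c = L_c^-1 R_c is y |-> c^-1 (y c): it fixes 1, and conjugation by a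
    nuclear element whose inverse is nuclear is an automorphism.  Since
    T_c(t) = c^-1 sigma(c) t, T_c = T_d forces c/d in F^x, so c |-> T_c has
    fibres of size at most q - 1 on K^x and takes at least
    (q^n - 1)/(q - 1) values. *)

Lemma leq_div_card_imset (T U : finType) (g : T -> U) (A : {set T}) k :
  (forall c, c \in A -> #|[set d in A | g d == g c]| <= k)%N ->
  (#|A| %/ k <= #|g @: A|)%N.
Proof.
move=> fibre_le; have [->|k_gt0] := posnP k; first by rewrite divn0.
rewrite -(mulnK #|g @: A| k_gt0) leq_div2r // -sum1_card (partition_big_imset g).
rewrite -sum_nat_const; apply: leq_sum => _ /imsetP[c cA ->].
by rewrite sum1_card -cardsE; apply: fibre_le.
Qed.

Section NuclearConjugation.
Variables (T : Type) (mul : T -> T -> T) (c c' : T).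
Hypothesis mul_c_mid : forall y z, mul (mul y c) z = mul y (mul c z).
Hypothesis mul_c_right : forall y z, mul (mul y z) c = mul y (mul z c).
Hypothesis mul_cV_left : forall y z, mul (mul c' y) z = mul c' (mul y z).
Hypothesis mul_cVK : cancel (mul c') (mul c).

Lemma conj_nuclear_morph x y :
  mul c' (mul (mul x y) c) = mul (mul c' (mul x c)) (mul c' (mul y c)).
Proof. by rewrite mul_cV_left mul_c_mid mul_cVK mul_c_right. Qed.

End NuclearConjugation.

Section SkewScalars.
Variables (K : fieldType) (sigma : {rmorphism K -> K}).

Lemma iter_rmorph0 i : iter i sigma 0 = 0.
Proof. by rewrite iter_fix ?rmorph0. Qed.

Lemma iter_rmorph_eq0 i c : (iter i sigma c == 0) = (c == 0).
Proof. by elim: i => //= i <-; rewrite fmorph_eq0. Qed.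

Lemma skmulCl c p : skmul sigma c%:P p = c *: p.
Proof.
rewrite /skmul size_polyC.
have [->|c_neq0] := eqVneq c 0; first by rewrite big_ord0 scale0r.
by rewrite big_ord1 /= expr0 mul1r coefC map_poly_id.
Qed.

Lemma skmulCr p c :
  skmul sigma p c%:P = \poly_(i < size p) (p`_i * iter i sigma c).
Proof.
rewrite poly_def; apply: eq_bigr => i _.
have -> : map_poly (iter i sigma) c%:P = (iter i sigma c)%:P.
  apply/polyP => j; rewrite coef_map_id0 ?iter_rmorph0 // !coefC.
  by case: eqP; rewrite ?iter_rmorph0.
by rewrite mulrC mul_polyC scalerA.
Qed.

Lemma skmodr_small (g f : {poly K}) : (size g < size f)%N -> skmodr sigma g f = g.
Proof. by move=> lt_gf; rewrite /skmodr; case: (size g) => [|k] //=; rewrite lt_gf. Qed.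

End SkewScalars.

Definition fixed_units (K : finFieldType) (sigma : K -> K) : {set K} :=
  [set x | (sigma x == x) && (x != 0)].

Lemma card_fixed_units (K : finFieldType) (sigma : {rmorphism K -> K}) :
  #|fixed_units sigma| = #|[set x : K | sigma x == x]|.-1.
Proof.
rewrite (cardsD1 0 [set x | sigma x == x]) inE rmorph0 eqxx /=.
by apply: eq_card => x; rewrite !inE andbC.
Qed.

Section ScalarLoop.
Variables (K : finFieldType) (sigma : {rmorphism K -> K}) (m : nat) (f : {poly K}).

Local Notation L := (Lf K m).
Local Notation "x ** y" := (Lmul sigma f x y) (at level 40, left associativity).

Lemma finvp_eq (h g : L -> L) y : injective h -> h (g y) = y -> finvp h y = g y.
Proof.
move=> h_inj hgy; rewrite /finvp; case: pickP => [z /eqP hz | none] /=.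
  by apply: h_inj; rewrite hz hgy.
by have := none (g y); rewrite hgy eqxx.
Qed.

Lemma Tmid_in_Mlt (x : L) : in_Mlt sigma f (Tmid sigma f x).
Proof.
have -> : Tmid sigma f x = [ffun y => finvp (Lleft sigma f x)
                              ([ffun y => Lright sigma f x ([ffun y => y] y)] y)].
  by apply/ffunP => y; rewrite !ffunE.
exact/Mlt_Linv/Mlt_R/Mlt_id.
Qed.

Lemma coef_pol (v : Sf K m) (j : 'I_m) : (pol v)`_j = v ord0 j.
Proof. by rewrite /pol coef_sumMXn (big_pred1 j). Qed.

Lemma size_pol (v : Sf K m) : (size (pol v) <= m)%N.
Proof.
apply/leq_sizeP => j le_mj; rewrite /pol coef_sumMXn big_pred0 // => i.
by apply/negbTE; apply: contraTneq le_mj => <-; rewrite -ltnNge.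
Qed.

Lemma vec_pol (v : Sf K m) : vec m (pol v) = v.
Proof. by apply/rowP => j; rewrite mxE coef_pol. Qed.

Lemma vecZ c (p : {poly K}) : vec m (c *: p) = c *: vec m p.
Proof. by apply/rowP => j; rewrite !mxE coefZ. Qed.

Hypotheses (m_gt0 : (0 < m)%N) (m_lt_size : (m < size f)%N).

Lemma pol_vecC (c : K) : pol (vec m c%:P) = c%:P.
Proof.
apply/polyP => j; case: (ltnP j m) => [lt_jm | le_mj].
  by rewrite (coef_pol _ (Ordinal lt_jm)) mxE.
rewrite coefC (gtn_eqF (leq_trans m_gt0 le_mj)).
by apply/(leq_sizeP _ _ (size_pol _)).
Qed.

Lemma vecC_eq0 (c : K) : (vec m c%:P == 0) = (c == 0).
Proof.
apply/eqP/eqP => [/rowP/(_ (Ordinal m_gt0)) | ->]; first by rewrite !mxE coefC.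
by apply/rowP => j; rewrite !mxE coef0.
Qed.

Lemma Smul_scalarl (c : K) (v : Sf K m) : Smul sigma f (vec m c%:P) v = c *: v.
Proof.
rewrite /Smul pol_vecC skmulCl skmodr_small ?vecZ ?vec_pol //.
exact: leq_ltn_trans (size_scale_leq _ _) (leq_ltn_trans (size_pol _) m_lt_size).
Qed.

Lemma Smul_scalarr (c : K) (v : Sf K m) :
  Smul sigma f v (vec m c%:P) = \row_(i < m) (v ord0 i * iter i sigma c).
Proof.
rewrite /Smul pol_vecC skmulCr skmodr_small; last first.
  exact: leq_ltn_trans (size_poly _ _) (leq_ltn_trans (size_pol _) m_lt_size).
apply/rowP => j; rewrite !mxE coef_poly coef_pol; case: ltnP => // le_size_j.
by rewrite -coef_pol (leq_sizeP _ _ le_size_j) ?mul0r.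
Qed.

(* For [c = 0] this is a junk value, the unit element. *)
Definition scalar_Lf (c : K) : L :=
  insubd (exist _ (vec m 1%:P) (negbT (etrans (vecC_eq0 1) (oner_eq0 K)))) (vec m c%:P).

Lemma val_scalar (c : K) : c != 0 -> val (scalar_Lf c) = vec m c%:P.
Proof. by move=> c_neq0; rewrite insubdK // unfold_in /= vecC_eq0. Qed.

Lemma val_Lmul_scalarl (c : K) (y : L) :
  c != 0 -> val (scalar_Lf c ** y) = c *: val y.
Proof.
move=> c_neq0; rewrite /Lmul val_scalar // Smul_scalarl insubdK //.
by rewrite unfold_in /= scaler_eq0 negb_or c_neq0 (valP y).
Qed.

Lemma val_Lmul_scalarr (c : K) (y : L) : c != 0 ->
  val (y ** scalar_Lf c) = \row_(i < m) (val y ord0 i * iter i sigma c).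
Proof.
move=> c_neq0; rewrite /Lmul val_scalar // Smul_scalarr insubdK // unfold_in /=.
apply: contra (valP y) => /eqP/rowP y_c0; apply/eqP/rowP => j.
have /eqP := y_c0 j.
by rewrite !mxE mulf_eq0 iter_rmorph_eq0 (negbTE c_neq0) orbF => /eqP.
Qed.

Lemma Lmul_scalar_linj (c : K) : c != 0 -> injective (Lmul sigma f (scalar_Lf c)).
Proof.
move=> c_neq0 y1 y2 /(congr1 val); rewrite !val_Lmul_scalarl //.
by move/(scalerI c_neq0)/val_inj.
Qed.

Lemma Lmul_scalar_rinj (c : K) : c != 0 -> injective (Lmul sigma f ^~ (scalar_Lf c)).
Proof.
move=> c_neq0 y1 y2 /(congr1 val); rewrite !val_Lmul_scalarr // => /rowP y12.
apply/val_inj/rowP => j; have := y12 j; rewrite !mxE; apply: mulIf.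
by rewrite iter_rmorph_eq0.
Qed.

Lemma Lmul_scalarVK (c : K) : c != 0 ->
  cancel (Lmul sigma f (scalar_Lf c^-1)) (Lmul sigma f (scalar_Lf c)).
Proof.
move=> c_neq0 y; apply/val_inj.
by rewrite !val_Lmul_scalarl ?invr_neq0 // scalerA divff // scale1r.
Qed.

Lemma Tmid_scalarE (c : K) (y : L) : c != 0 ->
  Tmid sigma f (scalar_Lf c) y = scalar_Lf c^-1 ** (y ** scalar_Lf c).
Proof.
move=> c_neq0; rewrite ffunE.
by apply: finvp_eq; [exact: Lmul_scalar_linj | exact: Lmul_scalarVK].
Qed.

Lemma Tmid_scalar_Inn (c : K) : c != 0 -> in_Inn sigma f (Tmid sigma f (scalar_Lf c)).
Proof.
move=> c_neq0; split=> [|u u_one]; first exact: Tmid_in_Mlt.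
apply/val_inj; rewrite Tmid_scalarE // val_Lmul_scalarl ?invr_neq0 //.
rewrite val_Lmul_scalarr // u_one; apply/rowP => j; rewrite !mxE coefC.
by case: eqP => [->|_]; rewrite ?mul1r ?mulVf // mul0r mulr0.
Qed.

Lemma Tmid_scalar_aut (c : K) : c != 0 ->
  in_nucleus sigma f (scalar_Lf c) -> in_nucleus sigma f (scalar_Lf c^-1) ->
  is_loop_aut sigma f (Tmid sigma f (scalar_Lf c)).
Proof.
move=> c_neq0 nuc_c nuc_cV; split=> [|x y].
  apply: injF_bij => y1 y2; rewrite !Tmid_scalarE //.
  by move/(Lmul_scalar_linj (invr_neq0 c_neq0))/(Lmul_scalar_rinj c_neq0).
rewrite !Tmid_scalarE //; apply: (conj_nuclear_morph _ _ _ (Lmul_scalarVK c_neq0)).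
- by move=> y1 y2; have [] := nuc_c y1 y2.
- by move=> y1 y2; have [] := nuc_c y1 y2.
- by move=> y1 y2; have [] := nuc_cV y1 y2.
Qed.

Lemma Tmid_scalar_coef (c : K) (y : L) (i : 'I_m) : c != 0 ->
  val (Tmid sigma f (scalar_Lf c) y) ord0 i = c^-1 * (val y ord0 i * iter i sigma c).
Proof.
move=> c_neq0; rewrite Tmid_scalarE // val_Lmul_scalarl ?invr_neq0 //.
by rewrite val_Lmul_scalarr // !mxE.
Qed.

Lemma Tmid_scalar_eq (c d : K) : (1 < m)%N -> c != 0 -> d != 0 ->
  Tmid sigma f (scalar_Lf c) = Tmid sigma f (scalar_Lf d) -> sigma (c / d) = c / d.
Proof.
move=> m_gt1 c_neq0 d_neq0 Tcd.
have t_neq0 : vec m ('X : {poly K}) != 0.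
  by apply/eqP => /rowP/(_ (Ordinal m_gt1)) /eqP; rewrite !mxE coefX oner_eq0.
pose t : L := exist (fun v => v != 0) _ t_neq0.
have t1 : val t ord0 (Ordinal m_gt1) = 1 by rewrite mxE coefX.
(* T_c(t) = c^-1 sigma(c) t *)
have := Tmid_scalar_coef t (Ordinal m_gt1) c_neq0.
rewrite Tcd (Tmid_scalar_coef t _ d_neq0) t1 !mul1r => cVsc.
have sc : sigma c = c / d * sigma d by rewrite -mulrA cVsc mulVKf.
by rewrite fmorph_div sc mulfK ?fmorph_eq0.
Qed.

Definition scalar_Tmids : {set {ffun L -> L}} :=
  [set Tmid sigma f (scalar_Lf c) | c in [set c : K | c != 0]].

Lemma card_scalar_Tmids : (1 < m)%N ->
  (#|K|.-1 %/ #|fixed_units sigma| <= #|scalar_Tmids|)%N.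
Proof.
move=> m_gt1; rewrite -(cardsC1 0).
have -> : [set~ 0] = [set c : K | c != 0] by apply/setP => c; rewrite !inE.
apply: leq_div_card_imset => c; rewrite inE => c_neq0.
apply: leq_trans (leq_imset_card (fun x => x * c) (fixed_units sigma)).
apply/subset_leq_card/subsetP => d.
rewrite !inE => /andP[d_neq0 /eqP Tdc].
apply/imsetP; exists (d / c); last by rewrite mulfVK.
by rewrite inE (Tmid_scalar_eq m_gt1 d_neq0 c_neq0 Tdc) eqxx mulf_neq0 ?invr_neq0.
Qed.

End ScalarLoop.

Theorem mainTheorem4 (K : finFieldType) (sigma : {rmorphism K -> K})
    (q n m : nat) (f : {poly K}) :
  bijective sigma ->
  (1 < n)%N ->
  (forall x : K, iter n sigma x = x) ->
  (forall k : nat, (0 < k < n)%N -> exists x : K, iter k sigma x != x) ->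
  #|[set x : K | sigma x == x]| = q ->
  #|K| = (q ^ n)%N ->
  f \is monic ->
  size f = m.+1 ->
  (2 <= m)%N ->
  sk_irreducible sigma f ->
  ~ right_invariant sigma f ->
  (m - 1 <= n)%N ->
  @nucleus_is_scalars K sigma m f ->
  exists s : seq {ffun Lf K m -> Lf K m},
    [/\ uniq s,
        ((q ^ n - 1) %/ (q - 1) <= size s)%N &
        forall T, T \in s ->
          [/\ exists c : Lf K m, T = Tmid sigma f c,
              in_Inn sigma f T &
              is_loop_aut sigma f T]].
Proof.
(* The remaining hypotheses are the paper's conditions for the nucleus to be
   K^x . 1; given that description of the nucleus they are not needed. *)
move=> _ _ _ _ card_F card_K _ size_f m_gt1 _ _ _ nucleus.
have m_gt0 : (0 < m)%N by apply: ltnW.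
have m_lt_size : (m < size f)%N by rewrite size_f.
have scalar_nuclear (c : K) : c != 0 -> in_nucleus sigma f (scalar_Lf m_gt0 c).
  by move=> c_neq0; apply/nucleus; exists c; rewrite val_scalar.
exists (enum (scalar_Tmids sigma f m_gt0)); split=> [||T].
- exact: enum_uniq.
- have card_Fx : #|fixed_units sigma| = (q - 1)%N.
    by rewrite card_fixed_units card_F subn1.
  by rewrite -cardE -card_Fx -card_K subn1 card_scalar_Tmids.
- rewrite mem_enum => /imsetP[c]; rewrite inE => c_neq0 ->; split.
  + by exists (scalar_Lf m_gt0 c).
  + exact: Tmid_scalar_Inn.
  + apply: (Tmid_scalar_aut m_lt_size c_neq0); apply: scalar_nuclear => //.
    by rewrite invr_neq0.
Qed.
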